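(* Let $d$ be a defined $n$-ary operator whose $i$-th argument position is Leibniz, for some $i\in\{1,\ldots,n\}$. Let $e_1,\ldots,e_n$ be any expressions, $\mathcal{M}$ a Kripke model, $w$ a state, and $x$ a rigid variable not occurring free in any $e_j$. Then $$[\![d(e_1,\ldots,e_n)]\!]^\mathcal{M}_w=[\![d(e_1,\ldots,e_{i-1},x,e_{i+1},\ldots,e_n)]\!]^{\mathcal{M}'}_w,$$ where $\mathcal{M}'$ agrees with $\mathcal{M}$ except that its valuation of rigid variables maps $x$ to $[\![e_i]\!]^\mathcal{M}_w$.
   Context: FOML syntax. Fix disjoint, non-empty, denumerable sets $\mathcal{X}$ (rigid variables), $\mathcal{V}$ (flexible variables) and $\mathcal{O}$ (operator symbols with arities). Expressions are given by $e ::= x \mid v \mid op(e,\ldots,e) \mid e=e \mid \mathrm{FALSE} \mid e\Rightarrow e \mid \forall x:e \mid \nabla e \mid d(e,\ldots,e)$, where $d$ ranges over defined operators. Only rigid variables are bound. Operator definitions. A definition has the form $d(x_1,\ldots,x_n)\triangleq e$, where: - $d$ is a fresh symbol; - $x_1,\ldots,x_n$ are pairwise distinct rigid variables; - $e$ is an expression, possibly using flexible variables and previously defined operators, whose free rigid variables are among $x_1,\ldots,x_n$. Leibniz argument positions. These are defined inductively. - All argument positions of operators in $\mathcal{O}$, and of all connectives other than $\nabla$ (that is, $=$, $\Rightarrow$, $\forall$), are Leibniz. The argument position of $\nabla$ is not Leibniz. - For $d(x_1,\ldots,x_n)\triangleq e$, the $i$-th argument position of $d$ is Leibniz iff $x_i$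 does not occur within a non-Leibniz argument position in $e$. Semantics. A Kripke model is $\mathcal{M}=(\mathcal{I},\xi,\mathcal{W},R,\zeta,\nabla_\mathcal{M})$, where: - $\mathcal{I}$ is a first-order interpretation with distinct values $\mathsf{tt},\mathsf{ff}$ in its universe; - $\xi:\mathcal{X}\to|\mathcal{I}|$; - $\mathcal{W}$ is a non-empty set of states and $R\subseteq\mathcal{W}^2$; - $\zeta:\mathcal{V}\times\mathcal{W}\to|\mathcal{I}|$; - $\nabla_\mathcal{M}:2^{|\mathcal{I}|}\to|\mathcal{I}|$ satisfies $\nabla_\mathcal{M}(S)=\mathsf{tt}$ iff $S\subseteq\{\mathsf{tt}\}$. Values are defined as follows. - $[\![x]\!]_w=\xi(x)$ and $[\![v]\!]_w=\zeta(v,w)$. - $[\![op(\vec e)]\!]_w=\mathcal{I}(op)(\ldots)$. - $[\![e_1=e_2]\!]_w$ is $\mathsf{tt}$ iff the values are equal, and $\mathsf{ff}$ otherwise. - $[\![\mathrm{FALSE}]\!]_w=\mathsf{ff}$. - $[\![\varphi\Rightarrow\psi]\!]_w=\mathsf{tt}$ iff $[\![\varphi]\!]_w\ne\mathsf{tt}$ or $[\![\psi]\!]_w=\mathsf{tt}$, and $\mathsf{ff}$ otherwise. - $\forall$ quantifies over the rigid variable valuation only, as usual. - $[\![\nabla\varphi]\!]_w=\nabla_\mathcal{M}(\{[\![\varphi]\!]_{w'}:(w,w')\in R\})$. - For $d(x_1,\ldots,x_n)\triangleq e$, $[\![d(e_1,\ldots,e_n)]\!]^\mathcal{M}_w=[\![e[e_1/x_1,\ldots,e_n/x_n]]\!]^\mathcal{M}_w$,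 using capture-avoiding substitution. *)

From Stdlib Require Import List Arith.
Import ListNotations.

(* A defined operator
   is referred to by its index in a definition list [defs]. *)
Inductive expr : Type :=
| ERigid (x : nat)
| EFlex (v : nat)
| EOp (o : nat) (args : list expr)
| EEq (a b : expr)
| EFalse
| EImp (a b : expr)
| EAll (x : nat) (body : expr)
| ENabla (a : expr)
| EDef (d : nat) (args : list expr).

Fixpoint fv (e : expr) : list nat :=
  match e with
  | ERigid x => [x]
  | EFlex _ => []
  | EOp _ args => flat_map fv args
  | EEq a b => fv a ++ fv b
  | EFalse => []
  | EImp a b => fv a ++ fv b
  | EAll x b => filter (fun y => negb (Nat.eqb y x)) (fv b)
  | ENabla a => fv a
  | EDef _ args => flat_map fv args
  end.

Definition memb (x : nat) (l : list nat) : bool := existsb (Nat.eqb x) l.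

Definition fresh (l : list nat) : nat := S (list_max l).

Fixpoint lookup (x : nat) (s : list (nat * expr)) : option expr :=
  match s with
  | [] => None
  | (y, a) :: s' => if Nat.eqb x y then Some a else lookup x s'
  end.

Definition remove_key (x : nat) (s : list (nat * expr)) : list (nat * expr) :=
  filter (fun p => negb (Nat.eqb (fst p) x)) s.

Fixpoint subst (s : list (nat * expr)) (e : expr) : expr :=
  match e with
  | ERigid y => match lookup y s with Some a => a | None => ERigid y end
  | EFlex v => EFlex v
  | EOp o args => EOp o (map (subst s) args)
  | EEq a b => EEq (subst s a) (subst s b)
  | EFalse => EFalse
  | EImp a b => EImp (subst s a) (subst s b)
  | EAll y b =>
      let s' := remove_key y s in
      if existsb (fun p => memb y (fv (snd p))) s' then
        let z := fresh (y :: fv b ++ map fst s' ++ flat_map (fun p => fv (snd p)) s') in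
        EAll z (subst ((y, ERigid z) :: s') b)
      else EAll y (subst s' b)
  | ENabla a => ENabla (subst s a)
  | EDef d args => EDef d (map (subst s) args)
  end.

(* A definition d(x_1,...,x_n) == body is stored as (params, body). *)
Definition defn := (list nat * expr)%type.

Fixpoint wf_expr (defs : list defn) (k : nat) (e : expr) : Prop :=
  match e with
  | ERigid _ | EFlex _ | EFalse => True
  | EOp _ args => fold_right (fun a P => wf_expr defs k a /\ P) True args
  | EEq a b | EImp a b => wf_expr defs k a /\ wf_expr defs k b
  | EAll _ b => wf_expr defs k b
  | ENabla a => wf_expr defs k a
  | EDef d args =>
      d < k /\
      (exists ps b, nth_error defs d = Some (ps, b) /\ length ps = length args) /\
      fold_right (fun a P => wf_expr defs k a /\ P) True args
  end.

Definition wf_defs (defs : list defn) : Prop :=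
  forall k ps b, nth_error defs k = Some (ps, b) ->
    NoDup ps /\ (forall y, In y (fv b) -> In y ps) /\ wf_expr defs k b.

(* [occurs_nonL leib x e]: the rigid variable x occurs (free) within a
   non-Leibniz argument position in e, where [leib d j] says that the j-th
   (0-based) argument position of defined operator d is Leibniz. *)
Fixpoint occurs_nonL (leib : nat -> nat -> Prop) (x : nat) (e : expr) : Prop :=
  match e with
  | ERigid _ | EFlex _ | EFalse => False
  | EOp _ args => fold_right (fun a P => occurs_nonL leib x a \/ P) False args
  | EEq a b | EImp a b => occurs_nonL leib x a \/ occurs_nonL leib x b
  | EAll y b => y <> x /\ occurs_nonL leib x b
  | ENabla a => In x (fv a)
  | EDef d args =>
      (fix go (j : nat) (l : list expr) : Prop :=
         match l with
         | [] => False
         | a :: l' => ((~ leib d j /\ In x (fv a)) \/ occurs_nonL leib x a)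
                      \/ go (S j) l'
         end) 0 args
  end.

Fixpoint leibF (defs : list defn) (k : nat) : nat -> nat -> Prop :=
  match k with
  | 0 => fun _ _ => False
  | S k' => fun d j =>
      if d <? k' then leibF defs k' d j
      else if d =? k' then
        match nth_error defs k' with
        | Some (ps, b) => j < length ps /\ ~ occurs_nonL (leibF defs k') (nth j ps 0) b
        | None => False
        end
      else False
  end.

(* the j-th (0-based) argument position of defined operator d is Leibniz *)
Definition leibniz (defs : list defn) (d j : nat) : Prop :=
  leibF defs (length defs) d j.

(* Kripke models, without the rigid valuation xi (passed separately). *)
Record kmodel := {
  U : Type;
  tt : U;
  ff : U;
  tt_neq_ff : tt <> ff;
  Iop : nat -> list U -> U;
  W : Type;
  W_inhabited : inhabited W;
  R : W -> W -> Prop;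
  zeta : nat -> W -> U;
  nab : (U -> Prop) -> U;
  nab_spec : forall S : U -> Prop, nab S = tt <-> (forall u, S u -> u = tt)
}.

Definition upd {A : Type} (xi : nat -> A) (x : nat) (u : A) : nat -> A :=
  fun y => if Nat.eqb y x then u else xi y.

(* V is the valuation [[e]]_w^{(M,xi)} written V xi w e: it satisfies the
   defining clauses of the semantics. *)
Definition is_semantics (M : kmodel) (defs : list defn)
    (V : (nat -> U M) -> W M -> expr -> U M) : Prop :=
  forall (xi : nat -> U M) (w : W M),
    (forall x, V xi w (ERigid x) = xi x) /\
    (forall v, V xi w (EFlex v) = zeta M v w) /\
    (forall o args, V xi w (EOp o args) = Iop M o (map (V xi w) args)) /\
    (forall a b, V xi w a = V xi w b -> V xi w (EEq a b) = tt M) /\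
    (forall a b, V xi w a <> V xi w b -> V xi w (EEq a b) = ff M) /\
    V xi w EFalse = ff M /\
    (forall a b, (V xi w a <> tt M \/ V xi w b = tt M) -> V xi w (EImp a b) = tt M) /\
    (forall a b, ~ (V xi w a <> tt M \/ V xi w b = tt M) -> V xi w (EImp a b) = ff M) /\
    (forall x b, (forall u, V (upd xi x u) w b = tt M) -> V xi w (EAll x b) = tt M) /\
    (forall x b, ~ (forall u, V (upd xi x u) w b = tt M) -> V xi w (EAll x b) = ff M) /\
    (forall a, V xi w (ENabla a) = nab M (fun u => exists w', R M w w' /\ V xi w' a = u)) /\
    (forall d ps b args, nth_error defs d = Some (ps, b) -> length args = length ps ->
       V xi w (EDef d args) = V xi w (subst (combine ps args) b)).

From Stdlib Require Import List Arith Lia Classical ClassicalEpsilon.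
From Stdlib Require Import FunctionalExtensionality.
Import ListNotations.

(* The valuation [V] is only specified by its clauses, and the clause for a
   defined operator substitutes into the body, so [V] cannot be analysed by
   structural induction.  We compare it with a structural denotation in which
   rigid variables denote world-dependent values, since a substituted argument
   may be evaluated at other worlds under [ENabla].  By induction along the
   order of definitions, [V] on [subst s e] is the denotation of [e] in the
   environment sending each variable to the value of its image under [s].
   Both sides of the theorem thus become denotations of the body in
   environments that agree everywhere except at the i-th parameter, where they
   agree at the current world only; as that parameter has no non-Leibniz
   occurrence, the only place where other worlds are consulted, the two
   denotations coincide. *)

Definition expr_nested_ind (P : expr -> Prop)
  (HR : forall x, P (ERigid x)) (HF : forall v, P (EFlex v))
  (HO : forall o args, Forall P args -> P (EOp o args))
  (HE : forall a b, P a -> P b -> P (EEq a b)) (HFa : P EFalse)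
  (HI : forall a b, P a -> P b -> P (EImp a b))
  (HA : forall x b, P b -> P (EAll x b)) (HN : forall a, P a -> P (ENabla a))
  (HD : forall d args, Forall P args -> P (EDef d args)) : forall e, P e :=
  fix F e :=
    let fix Fs l : Forall P l :=
      match l with [] => Forall_nil _ | a :: l' => Forall_cons _ (F a) (Fs l') end in
    match e with
    | ERigid x => HR x
    | EFlex v => HF v
    | EOp o args => HO o args (Fs args)
    | EEq a b => HE a b (F a) (F b)
    | EFalse => HFa
    | EImp a b => HI a b (F a) (F b)
    | EAll x b => HA x b (F b)
    | ENabla a => HN a (F a)
    | EDef d args => HD d args (Fs args)
    end.

Lemma fold_right_and_In {A : Type} (P : A -> Prop) (l : list A) :
  fold_right (fun a Q => P a /\ Q) True l -> forall a, In a l -> P a.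
Proof.
  induction l as [|b l IH]; cbn; [tauto|].
  intros [Hb Hl] a [<-|Ha]; auto.
Qed.

Fixpoint assoc {A : Type} (z : nat) (l : list (nat * A)) : option A :=
  match l with
  | [] => None
  | (y, a) :: l' => if z =? y then Some a else assoc z l'
  end.

Lemma lookup_assoc z s : lookup z s = assoc z s.
Proof. induction s as [|[y a] s IH]; cbn; [|rewrite IH]; reflexivity. Qed.

Lemma assoc_In {A : Type} z (l : list (nat * A)) a : assoc z l = Some a -> In (z, a) l.
Proof.
  induction l as [|[y b] l IH]; cbn; [discriminate|].
  destruct (Nat.eqb_spec z y) as [->|]; [intros [= ->]|]; auto.
Qed.

Lemma lookup_In z s a : lookup z s = Some a -> In (z, a) s.
Proof. rewrite lookup_assoc. apply assoc_In. Qed.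

Lemma assoc_combine_map {A B : Type} (f : A -> B) z ps (l : list A) :
  assoc z (combine ps (map f l)) = option_map f (assoc z (combine ps l)).
Proof.
  revert l; induction ps as [|p ps IH]; intros [|a l]; cbn; auto.
  destruct (z =? p); auto.
Qed.

Lemma assoc_combine_Some {A : Type} z ps (l : list A) a :
  assoc z (combine ps l) = Some a -> exists j, nth j ps 0 = z /\ nth_error l j = Some a.
Proof.
  revert l; induction ps as [|p ps IH]; intros [|b l]; cbn; try discriminate.
  destruct (Nat.eqb_spec z p) as [->|]; intros H.
  - injection H as ->. exists 0; auto.
  - destruct (IH _ H) as (j & ? & ?). exists (S j); auto.
Qed.

Lemma assoc_combine_exists {A : Type} z ps (l : list A) :
  In z ps -> length l = length ps -> exists a, assoc z (combine ps l) = Some a.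
Proof.
  revert l; induction ps as [|p ps IH]; intros [|b l] Hz Hl; cbn in *; try (lia || tauto).
  destruct (Nat.eqb_spec z p); eauto.
  destruct Hz as [->|Hz]; [congruence|auto].
Qed.

Lemma assoc_combine_nth {A : Type} ps (l : list A) j a0 :
  NoDup ps -> j < length ps -> length l = length ps ->
  assoc (nth j ps 0) (combine ps l) = Some (nth j l a0).
Proof.
  revert l j; induction ps as [|p ps IH]; intros [|b l] j Hnd Hj Hl; cbn in *; try lia.
  inversion_clear Hnd as [|? ? Hp Hnd'].
  destruct j as [|j]; cbn; [rewrite Nat.eqb_refl; reflexivity|].
  destruct (Nat.eqb_spec (nth j ps 0) p) as [E|]; [|apply IH; auto; lia].
  exfalso; apply Hp; rewrite <- E; apply nth_In; lia.
Qed.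

Lemma lookup_remove_key_neq z y s : z <> y -> lookup z (remove_key y s) = lookup z s.
Proof.
  intros Hzy; induction s as [|[k a] s IH]; cbn; auto.
  destruct (Nat.eqb_spec k y) as [->|]; cbn.
  - destruct (Nat.eqb_spec z y); [congruence|auto].
  - destruct (z =? k); auto.
Qed.

Lemma lookup_remove_key_eq y s : lookup y (remove_key y s) = None.
Proof.
  induction s as [|[k a] s IH]; cbn; auto.
  destruct (Nat.eqb_spec k y) as [->|]; cbn; auto.
  destruct (Nat.eqb_spec y k); [congruence|auto].
Qed.

Lemma In_remove_key z y s a : lookup z s = Some a -> z <> y -> In (z, a) (remove_key y s).
Proof.
  intros Hl Hzy. apply filter_In. split; [apply lookup_In, Hl|].
  cbn. apply Bool.negb_true_iff, Nat.eqb_neq, Hzy.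
Qed.

Lemma fresh_not_In y l : In y l -> fresh l <> y.
Proof.
  intros Hy E. unfold fresh in E.
  assert (Hmax : Forall (fun k => k <= list_max l) l) by (apply list_max_le; lia).
  rewrite Forall_forall in Hmax. specialize (Hmax y Hy). lia.
Qed.

Lemma In_fv_EAll v y b : In v (fv b) -> v <> y -> In v (fv (EAll y b)).
Proof.
  intros Hv Hvy. apply filter_In. split; [exact Hv|].
  apply Bool.negb_true_iff, Nat.eqb_neq, Hvy.
Qed.

Lemma subst_nil e : subst [] e = e.
Proof.
  induction e as [| |? ? IH| | | | | |? ? IH] using expr_nested_ind; cbn; f_equal; auto;
    induction IH; cbn; f_equal; auto.
Qed.

(* Covers both branches of the binder clause of [subst]: the bound variable
   [y] becomes [z], with [z = y] when no renaming is needed. *)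
Definition binder_safe (s : list (nat * expr)) (y : nat) (b : expr) (z : nat) : Prop :=
  forall v, In v (fv b) -> v <> y ->
    v <> z /\ forall a, lookup v s = Some a -> ~ In z (fv a).

Lemma subst_EAll_spec s y b : exists z t,
  subst s (EAll y b) = EAll z (subst t b) /\ binder_safe s y b z /\
  (forall v, v <> y -> lookup v t = lookup v s) /\
  (lookup y t = Some (ERigid z) \/ (lookup y t = None /\ z = y)).
Proof.
  cbn [subst]. cbv zeta. destruct existsb eqn:Hcapture.
  - set (L := y :: fv b ++ map fst (remove_key y s)
                 ++ flat_map (fun p => fv (snd p)) (remove_key y s)).
    exists (fresh L), ((y, ERigid (fresh L)) :: remove_key y s).
    split; [reflexivity|]. split; [|split].
    + intros v Hv Hvy. split.
      * intros E. apply (fresh_not_In v L); [|congruence].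
        right; apply in_or_app; left; exact Hv.
      * intros a Hl Hz. apply (fresh_not_In (fresh L) L); [|reflexivity].
        right; do 2 (apply in_or_app; right). apply in_flat_map.
        exists (v, a). split; [apply In_remove_key|]; assumption.
    + intros v Hvy. cbn. rewrite (proj2 (Nat.eqb_neq v y) Hvy).
      apply lookup_remove_key_neq, Hvy.
    + left. cbn. rewrite Nat.eqb_refl. reflexivity.
  - exists y, (remove_key y s). split; [reflexivity|]. split; [|split].
    + intros v Hv Hvy. split; [exact Hvy|]. intros a Hl Hy.
      enough (existsb (fun p => memb y (fv (snd p))) (remove_key y s) = true)
        by congruence.
      apply existsb_exists. exists (v, a). split; [apply In_remove_key; assumption|].
      apply existsb_exists. exists y. split; [exact Hy|apply Nat.eqb_refl].
    + intros v Hvy. apply lookup_remove_key_neq, Hvy.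
    + right. split; [apply lookup_remove_key_eq|reflexivity].
Qed.

Lemma fv_subst e : forall s z, In z (fv e) ->
  match lookup z s with
  | Some a => forall v, In v (fv a) -> In v (fv (subst s e))
  | None => In z (fv (subst s e))
  end.
Proof.
  induction e as [y|v|o args IH|a b IHa IHb| |a b IHa IHb|y b IHb|a IHa|d args IH]
    using expr_nested_ind; intros s z Hz; cbn in Hz; try contradiction.
  - destruct Hz as [->|[]]. cbn. destruct (lookup z s); cbn; auto.
  - apply in_flat_map in Hz as (a & Ha & Hz). rewrite Forall_forall in IH.
    specialize (IH a Ha s z Hz). cbn.
    destruct (lookup z s); [intros v Hv; specialize (IH v Hv)|];
      apply in_flat_map; exists (subst s a); split; auto; apply in_map, Ha.
  - cbn. apply in_app_or in Hz as [Hz|Hz];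
      [specialize (IHa s z Hz)|specialize (IHb s z Hz)];
      destruct (lookup z s); try intros v Hv; apply in_or_app; auto.
  - cbn. apply in_app_or in Hz as [Hz|Hz];
      [specialize (IHa s z Hz)|specialize (IHb s z Hz)];
      destruct (lookup z s); try intros v Hv; apply in_or_app; auto.
  - apply filter_In in Hz as [Hz Hzy]. apply Bool.negb_true_iff, Nat.eqb_neq in Hzy.
    destruct (subst_EAll_spec s y b) as (z' & t & -> & Hsafe & Ht & _).
    destruct (Hsafe z Hz Hzy) as [Hzz' Hcapt].
    specialize (IHb t z Hz). rewrite (Ht z Hzy) in IHb.
    destruct (lookup z s) as [a|]; [intros v Hv|];
      apply In_fv_EAll; auto; intros ->; exact (Hcapt a eq_refl Hv).
  - cbn. apply IHa, Hz.
  - apply in_flat_map in Hz as (a & Ha & Hz). rewrite Forall_forall in IH.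
    specialize (IH a Ha s z Hz). cbn.
    destruct (lookup z s); [intros v Hv; specialize (IH v Hv)|];
      apply in_flat_map; exists (subst s a); split; auto; apply in_map, Ha.
Qed.

Lemma occurs_nonL_EOp L x o args a :
  In a args -> occurs_nonL L x a -> occurs_nonL L x (EOp o args).
Proof.
  intros Ha Hocc. change (fold_right (fun a P => occurs_nonL L x a \/ P) False args).
  induction args as [|b args IH]; cbn in *; [contradiction|].
  destruct Ha as [->|Ha]; auto.
Qed.

(* The inner [fix] of the [EDef] clause of [occurs_nonL], named so that it
   can be generalised over its starting position. *)
Definition occurs_nonL_args (L : nat -> nat -> Prop) (x d : nat) :=
  fix go (j : nat) (l : list expr) : Prop :=
    match l with
    | [] => False
    | a :: l' => ((~ L d j /\ In x (fv a)) \/ occurs_nonL L x a) \/ go (S j) l'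
    end.

Lemma occurs_nonL_args_nth L x d args : forall j j0 a, nth_error args j = Some a ->
  (~ L d (j0 + j) /\ In x (fv a)) \/ occurs_nonL L x a -> occurs_nonL_args L x d j0 args.
Proof.
  induction args as [|b args IH]; intros [|j] j0 a Hj Hocc; cbn in *; try discriminate.
  - injection Hj as ->. rewrite Nat.add_0_r in Hocc. auto.
  - right. apply (IH j (S j0) a Hj). rewrite Nat.add_succ_comm. exact Hocc.
Qed.

Lemma occurs_nonL_EDef L x d args j a : nth_error args j = Some a ->
  (~ L d j /\ In x (fv a)) \/ occurs_nonL L x a -> occurs_nonL L x (EDef d args).
Proof. intros Hj Hocc. exact (occurs_nonL_args_nth L x d args j 0 a Hj Hocc). Qed.

Lemma leibF_not_occurs_nonL defs m d j ps b :
  leibF defs m d j -> nth_error defs d = Some (ps, b) ->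
  ~ occurs_nonL (leibF defs d) (nth j ps 0) b.
Proof.
  induction m as [|m IH]; cbn [leibF]; [tauto|].
  destruct (Nat.ltb_spec d m) as [_|_]; [exact IH|].
  destruct (Nat.eqb_spec d m) as [->|]; [|tauto].
  intros Hleib Hd. rewrite Hd in Hleib. apply Hleib.
Qed.

(** * A structural denotational semantics *)

Section Denotation.
Context {M : kmodel}.
Variable defs : list defn.

Definition truth (P : Prop) : U M := if excluded_middle_informative P then tt M else ff M.

Lemma truth_forall_ext {A : Type} (f g : A -> U M) : (forall u, f u = g u) ->
  truth (forall u, f u = tt M) = truth (forall u, g u = tt M).
Proof. intros H. replace g with f by (apply functional_extensionality, H). reflexivity. Qed.

Lemma nab_ext (f g : W M -> U M) w : (forall w', f w' = g w') ->
  nab M (fun u => exists w', R M w w' /\ f w' = u) =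
  nab M (fun u => exists w', R M w w' /\ g w' = u).
Proof. intros H. replace g with f by (apply functional_extensionality, H). reflexivity. Qed.

(* The default [tt M] is never used: the free variables of a body are among
   its parameters. *)
Definition param_env (ps : list nat) (dens : list (W M -> U M)) (z : nat) : W M -> U M :=
  match assoc z (combine ps dens) with Some f => f | None => fun _ => tt M end.

Fixpoint denote (ops : nat -> list (W M -> U M) -> W M -> U M)
    (rho : nat -> W M -> U M) (w : W M) (e : expr) : U M :=
  match e with
  | ERigid y => rho y w
  | EFlex v => zeta M v w
  | EOp o args => Iop M o (map (denote ops rho w) args)
  | EEq a b => truth (denote ops rho w a = denote ops rho w b)
  | EFalse => ff M
  | EImp a b => truth (denote ops rho w a <> tt M \/ denote ops rho w b = tt M)
  | EAll y b => truth (forall u, denote ops (upd rho y (fun _ => u)) w b = tt M)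
  | ENabla a => nab M (fun u => exists w', R M w w' /\ denote ops rho w' a = u)
  | EDef d args => ops d (map (fun a w' => denote ops rho w' a) args) w
  end.

(* [n] is fuel; it suffices once it exceeds the index of every definition
   involved, since a body only refers to earlier definitions. *)
Fixpoint denote_def (n d : nat) (dens : list (W M -> U M)) (w : W M) : U M :=
  match n with
  | 0 => tt M
  | S n' =>
      match nth_error defs d with
      | Some (ps, b) => denote (denote_def n') (param_env ps dens) w b
      | None => tt M
      end
  end.

Lemma denote_def_S n d ps b dens w : nth_error defs d = Some (ps, b) ->
  denote_def (S n) d dens w = denote (denote_def n) (param_env ps dens) w b.
Proof. intros Hd. cbn [denote_def]. rewrite Hd. reflexivity. Qed.

Definition leibniz_agree (L : nat -> nat -> Prop) (e : expr) (w : W M)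
    (rho rho' : nat -> W M -> U M) : Prop :=
  forall z, In z (fv e) -> rho z = rho' z \/ (rho z w = rho' z w /\ ~ occurs_nonL L z e).

Lemma leibniz_agree_sub L a e w rho rho' :
  (forall z, In z (fv a) -> In z (fv e)) ->
  (forall z, occurs_nonL L z a -> occurs_nonL L z e) ->
  leibniz_agree L e w rho rho' -> leibniz_agree L a w rho rho'.
Proof.
  intros Hfv Hocc H z Hz. destruct (H z (Hfv z Hz)) as [E|[E Hn]]; auto.
  right. split; auto.
Qed.

Lemma leibniz_agree_EAll L y b w rho rho' c :
  leibniz_agree L (EAll y b) w rho rho' ->
  leibniz_agree L b w (upd rho y c) (upd rho' y c).
Proof.
  intros H z Hz. unfold upd. destruct (Nat.eqb_spec z y) as [->|Hzy]; [auto|].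
  destruct (H z (In_fv_EAll z y b Hz Hzy)) as [E|[E Hn]]; auto.
  right. split; [exact E|]. intros Hocc. apply Hn. split; auto.
Qed.

Definition respects_leibniz (ops : nat -> list (W M -> U M) -> W M -> U M) : Prop :=
  forall m d (args : list expr) (f g : expr -> W M -> U M) w,
    (forall j a, nth_error args j = Some a ->
       f a = g a \/ (f a w = g a w /\ leibF defs m d j)) ->
    ops d (map f args) w = ops d (map g args) w.

Lemma denote_leibniz_ext ops (Hops : respects_leibniz ops) : forall e m w rho rho',
  leibniz_agree (leibF defs m) e w rho rho' -> denote ops rho w e = denote ops rho' w e.
Proof.
  induction e as [y|v|o args IH|a b IHa IHb| |a b IHa IHb|y b IHb|a IHa|d args IH]
    using expr_nested_ind; intros m w rho rho' H; cbn [denote].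
  - destruct (H y (or_introl eq_refl)) as [->|[E _]]; [reflexivity|exact E].
  - reflexivity.
  - f_equal. apply map_ext_in. intros a Ha. rewrite Forall_forall in IH.
    apply (IH a Ha m). revert H. apply leibniz_agree_sub.
    + intros z Hz. apply in_flat_map; eauto.
    + intros z. apply occurs_nonL_EOp, Ha.
  - rewrite (IHa m w rho rho'), (IHb m w rho rho'); [reflexivity| |];
      revert H; apply leibniz_agree_sub; cbn; auto using in_or_app.
  - reflexivity.
  - rewrite (IHa m w rho rho'), (IHb m w rho rho'); [reflexivity| |];
      revert H; apply leibniz_agree_sub; cbn; auto using in_or_app.
  - apply truth_forall_ext. intros c. apply (IHb m), leibniz_agree_EAll, H.
  - apply nab_ext. intros w'. apply (IHa m). intros z Hz. left.
    destruct (H z Hz) as [E|[_ Hn]]; [exact E|contradiction].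
  - apply (Hops m). intros j a Hja.
    assert (Ha : In a args) by (eapply nth_error_In; eauto).
    rewrite Forall_forall in IH. specialize (IH a Ha).
    destruct (classic (leibF defs m d j)) as [Hleib|Hnonleib].
    + right. split; [|exact Hleib]. apply (IH m). revert H. apply leibniz_agree_sub.
      * intros z Hz. apply in_flat_map; eauto.
      * intros z Hocc. apply (occurs_nonL_EDef _ _ _ _ j a Hja). right; exact Hocc.
    + left. apply functional_extensionality; intros w'. apply (IH m).
      intros z Hz. left.
      assert (Hz_e : In z (fv (EDef d args))) by (apply in_flat_map; eauto).
      destruct (H z Hz_e) as [E|[_ Hn]]; [exact E|].
      exfalso. apply Hn, (occurs_nonL_EDef _ _ _ _ j a Hja). left; auto.
Qed.

(* An argument at a Leibniz position [j] is handed to the body as the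
   parameter [nth j ps 0], which has no non-Leibniz occurrence there. *)
Lemma denote_def_respects_leibniz n : respects_leibniz (denote_def n).
Proof.
  induction n as [|n IHn]; intros m d args f g w H; cbn [denote_def]; [reflexivity|].
  destruct (nth_error defs d) as [[ps b]|] eqn:Hd; [|reflexivity].
  apply (denote_leibniz_ext _ IHn b d). intros z Hz.
  unfold param_env. rewrite !assoc_combine_map.
  destruct (assoc z (combine ps args)) as [a|] eqn:Hza; cbn; [|left; reflexivity].
  destruct (assoc_combine_Some _ _ _ _ Hza) as (j & Hjz & Hja).
  destruct (H j a Hja) as [E|[E Hleib]]; [left; exact E|right; split; [exact E|]].
  rewrite <- Hjz. exact (leibF_not_occurs_nonL defs m d j ps b Hleib Hd).
Qed.

Lemma denote_ext n e rho rho' w : (forall z, In z (fv e) -> rho z = rho' z) ->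
  denote (denote_def n) rho w e = denote (denote_def n) rho' w e.
Proof.
  intros H. apply (denote_leibniz_ext _ (denote_def_respects_leibniz n) e 0).
  intros z Hz. left; auto.
Qed.

End Denotation.

(** * Relating the valuation to the denotation *)

Section Valuation.
Context {defs : list defn} {M : kmodel} {V : (nat -> U M) -> W M -> expr -> U M}.
Hypothesis HV : is_semantics M defs V.

Ltac clauses xi w := destruct (HV xi w) as (h1&h2&h3&h4&h5&h6&h7&h8&h9&h10&h11&h12).

Lemma V_rigid xi w y : V xi w (ERigid y) = xi y.
Proof. clauses xi w; auto. Qed.

Lemma V_flex xi w v : V xi w (EFlex v) = zeta M v w.
Proof. clauses xi w; auto. Qed.

Lemma V_op xi w o args : V xi w (EOp o args) = Iop M o (map (V xi w) args).
Proof. clauses xi w; auto. Qed.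

Lemma V_false xi w : V xi w EFalse = ff M.
Proof. clauses xi w; auto. Qed.

Lemma V_eq xi w a b : V xi w (EEq a b) = truth (V xi w a = V xi w b).
Proof. clauses xi w; unfold truth; destruct excluded_middle_informative; auto. Qed.

Lemma V_imp xi w a b :
  V xi w (EImp a b) = truth (V xi w a <> tt M \/ V xi w b = tt M).
Proof. clauses xi w; unfold truth; destruct excluded_middle_informative; auto. Qed.

Lemma V_all xi w y b : V xi w (EAll y b) = truth (forall u, V (upd xi y u) w b = tt M).
Proof. clauses xi w; unfold truth; destruct excluded_middle_informative; auto. Qed.

Lemma V_nab xi w a :
  V xi w (ENabla a) = nab M (fun u => exists w', R M w w' /\ V xi w' a = u).
Proof. clauses xi w; auto. Qed.

Lemma V_def xi w d ps b args : nth_error defs d = Some (ps, b) -> length args = length ps ->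
  V xi w (EDef d args) = V xi w (subst (combine ps args) b).
Proof. clauses xi w; auto. Qed.

Definition coincidence (a : expr) : Prop :=
  forall xi xi' w, (forall z, In z (fv a) -> xi z = xi' z) -> V xi w a = V xi' w a.

Lemma coincidence_rigid y : coincidence (ERigid y).
Proof. intros xi xi' w H. rewrite !V_rigid. apply H. left; reflexivity. Qed.

Lemma coincidence_upd_fresh a x u xi w : coincidence a -> ~ In x (fv a) ->
  V (upd xi x u) w a = V xi w a.
Proof.
  intros Ha Hx. apply Ha. intros z Hz. unfold upd.
  destruct (Nat.eqb_spec z x) as [->|]; [contradiction|reflexivity].
Qed.

Lemma coincidence_combine ps args : Forall coincidence args ->
  forall y a, lookup y (combine ps args) = Some a -> coincidence a.
Proof.
  intros Hargs y a Hl. rewrite Forall_forall in Hargs. apply Hargs.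
  apply lookup_In, in_combine_r in Hl. exact Hl.
Qed.

Definition subst_env (s : list (nat * expr)) (xi : nat -> U M) (z : nat) : W M -> U M :=
  match lookup z s with Some a => fun w' => V xi w' a | None => fun _ => xi z end.

Lemma subst_env_combine_nth ps args xi j :
  NoDup ps -> j < length ps -> length args = length ps ->
  subst_env (combine ps args) xi (nth j ps 0) = fun w' => V xi w' (nth j args EFalse).
Proof.
  intros Hnd Hj Hlen. unfold subst_env.
  rewrite lookup_assoc, (assoc_combine_nth ps args j EFalse); auto.
Qed.

Lemma subst_env_agree s e xi1 xi2 :
  (forall y a, lookup y s = Some a -> coincidence a) ->
  (forall z, In z (fv (subst s e)) -> xi1 z = xi2 z) ->
  forall z, In z (fv e) -> subst_env s xi1 z = subst_env s xi2 z.
Proof.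
  intros Hs Hag z Hz. pose proof (fv_subst e s z Hz) as Hfv. unfold subst_env.
  destruct (lookup z s) as [a|] eqn:Hl; [|rewrite (Hag z Hfv); reflexivity].
  apply functional_extensionality; intros w'. apply (Hs z a Hl). intros v Hv; auto.
Qed.

Lemma subst_env_binder s t y z b xi u :
  (forall y' a, lookup y' s = Some a -> coincidence a) ->
  binder_safe s y b z -> (forall v, v <> y -> lookup v t = lookup v s) ->
  (lookup y t = Some (ERigid z) \/ (lookup y t = None /\ z = y)) ->
  forall v, In v (fv b) -> subst_env t (upd xi z u) v = upd (subst_env s xi) y (fun _ => u) v.
Proof.
  intros Hs Hsafe Ht Hty v Hv. unfold subst_env, upd.
  destruct (Nat.eqb_spec v y) as [->|Hvy].
  - destruct Hty as [-> | [-> ->]]; apply functional_extensionality; intros w'.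
    + rewrite V_rigid. unfold upd. rewrite Nat.eqb_refl. reflexivity.
    + rewrite Nat.eqb_refl. reflexivity.
  - destruct (Hsafe v Hv Hvy) as [Hvz Hcapt]. rewrite (Ht v Hvy).
    destruct (lookup v s) as [a|] eqn:Hl.
    + apply functional_extensionality; intros w'. apply (Hs v a Hl).
      intros z' Hz'. unfold upd. destruct (Nat.eqb_spec z' z) as [->|]; [|reflexivity].
      exfalso. exact (Hcapt a eq_refl Hz').
    + rewrite (proj2 (Nat.eqb_neq v z) Hvz). reflexivity.
Qed.

Hypothesis Hdefs : wf_defs defs.

(* Induction on [k] handles the [EDef] clause of [V], which unfolds into a
   body that is no subterm of [e] but uses only earlier definitions. *)
Lemma V_subst_denote k : forall e, wf_expr defs k e -> forall n, k <= n ->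
  forall s, (forall y a, lookup y s = Some a -> coincidence a) ->
  forall xi w, V xi w (subst s e) = denote (denote_def defs n) (subst_env s xi) w e.
Proof.
  induction k as [k IHk] using (well_founded_induction lt_wf).
  intros e; induction e as [y|v|o args IH|a b IHa IHb| |a b IHa IHb|y b IHb|a IHa|d args IH]
    using expr_nested_ind; intros Hwf n Hkn s Hs xi w; cbn [denote].
  - cbn. unfold subst_env. destruct (lookup y s); [reflexivity|apply V_rigid].
  - apply V_flex.
  - cbn. rewrite V_op, map_map. f_equal. apply map_ext_in. intros a Ha.
    rewrite Forall_forall in IH. apply IH; auto.
    exact (fold_right_and_In (wf_expr defs k) args Hwf a Ha).
  - destruct Hwf as [Hwfa Hwfb]. cbn.
    rewrite V_eq, (IHa Hwfa n Hkn s Hs), (IHb Hwfb n Hkn s Hs). reflexivity.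
  - apply V_false.
  - destruct Hwf as [Hwfa Hwfb]. cbn.
    rewrite V_imp, (IHa Hwfa n Hkn s Hs), (IHb Hwfb n Hkn s Hs). reflexivity.
  - destruct (subst_EAll_spec s y b) as (z & t & -> & Hsafe & Ht & Hty).
    rewrite V_all. apply truth_forall_ext. intros u.
    rewrite (IHb Hwf n Hkn t).
    + apply denote_ext, subst_env_binder; assumption.
    + intros y' a Hl. destruct (Nat.eqb_spec y' y) as [->|Hy'y].
      * destruct Hty as [Hty|[Hty _]]; rewrite Hty in Hl; [|discriminate].
        injection Hl as <-. apply coincidence_rigid.
      * rewrite (Ht y' Hy'y) in Hl. exact (Hs y' a Hl).
  - cbn. rewrite V_nab. apply nab_ext. intros w'. apply IHa; assumption.
  - destruct Hwf as (Hdk & (ps & b & Hd & Hlen) & Hwfargs).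
    destruct n as [|n]; [lia|]. cbn [subst]. rewrite (denote_def_S _ _ _ _ _ _ _ Hd).
    destruct (Hdefs d ps b Hd) as (_ & Hfvb & Hwfb).
    rewrite Forall_forall in IH.
    assert (IHargs : forall a, In a args -> forall xi w,
        V xi w (subst s a) = denote (denote_def defs (S n)) (subst_env s xi) w a).
    { intros a Ha. apply IH; auto. exact (fold_right_and_In _ args Hwfargs a Ha). }
    assert (Hcoinc : Forall coincidence (map (subst s) args)).
    { apply Forall_forall. intros a' Ha'. apply in_map_iff in Ha' as (a & <- & Ha).
      intros xi1 xi2 w1 Hag. rewrite !IHargs by exact Ha.
      apply denote_ext, (subst_env_agree s a); assumption. }
    rewrite (V_def _ _ _ ps b _ Hd) by (rewrite length_map; auto).
    rewrite (IHk d Hdk b Hwfb n ltac:(lia) _ (coincidence_combine ps _ Hcoinc)).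
    apply denote_ext. intros z Hz. unfold subst_env, param_env.
    rewrite lookup_assoc, !assoc_combine_map.
    destruct (assoc_combine_exists z ps args (Hfvb z Hz) (eq_sym Hlen)) as [a Ha].
    rewrite Ha. cbn. apply functional_extensionality; intros w'.
    apply IHargs. apply (in_combine_r ps args z), assoc_In, Ha.
Qed.

Lemma coincidence_wf k e : wf_expr defs k e -> coincidence e.
Proof.
  intros Hwf xi xi' w Hag. rewrite <- (subst_nil e).
  rewrite !(V_subst_denote k e Hwf k (le_n k) []) by (cbn; discriminate).
  apply denote_ext. intros z Hz. unfold subst_env. cbn. rewrite (Hag z Hz). reflexivity.
Qed.

End Valuation.

Lemma Forall_app_cons {A : Type} (P : A -> Prop) l1 a b l2 :
  Forall P (l1 ++ a :: l2) -> P b -> Forall P (l1 ++ b :: l2).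
Proof.
  rewrite !Forall_app. intros [Hl1 Hl2] Hb. inversion_clear Hl2. auto.
Qed.

Lemma nth_app_cons_neq {A : Type} (l1 l2 : list A) a b j a0 : j <> length l1 ->
  nth j (l1 ++ a :: l2) a0 = nth j (l1 ++ b :: l2) a0.
Proof.
  intros Hj. destruct (Nat.lt_ge_cases j (length l1)).
  - rewrite !app_nth1; auto.
  - rewrite !app_nth2 by auto. destruct (j - length l1) eqn:E; [lia|reflexivity].
Qed.

Theorem lemma2 (defs : list defn) (Hdefs : wf_defs defs)
  (M : kmodel) (V : (nat -> U M) -> W M -> expr -> U M)
  (HV : is_semantics M defs V)
  (d : nat) (ps : list nat) (body : expr)
  (Hd : nth_error defs d = Some (ps, body))
  (l1 : list expr) (ei : expr) (l2 : list expr)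
  (Harity : length (l1 ++ ei :: l2) = length ps)
  (Hleib : leibniz defs d (length l1))
  (Hwf : Forall (wf_expr defs (length defs)) (l1 ++ ei :: l2))
  (xi : nat -> U M) (w : W M) (x : nat)
  (Hx : Forall (fun e => ~ In x (fv e)) (l1 ++ ei :: l2)) :
  V xi w (EDef d (l1 ++ ei :: l2)) =
  V (upd xi x (V xi w ei)) w (EDef d (l1 ++ ERigid x :: l2)).
Proof.
  destruct (Hdefs d ps body Hd) as (Hnd & Hfv & Hwfb).
  assert (Harity' : length (l1 ++ ERigid x :: l2) = length ps)
    by (rewrite <- Harity, !length_app; reflexivity).
  assert (Hcoinc : Forall (@coincidence M V) (l1 ++ ei :: l2))
    by (revert Hwf; apply Forall_impl; apply (coincidence_wf HV Hdefs)).
  assert (Hcoinc' : Forall (@coincidence M V) (l1 ++ ERigid x :: l2))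
    by exact (Forall_app_cons _ _ _ _ _ Hcoinc (coincidence_rigid HV x)).
  rewrite (V_def HV _ _ _ _ _ _ Hd Harity), (V_def HV _ _ _ _ _ _ Hd Harity').
  rewrite !(V_subst_denote HV Hdefs d body Hwfb d (le_n d))
    by (apply coincidence_combine; assumption).
  apply (denote_leibniz_ext defs _ (denote_def_respects_leibniz defs d) body d).
  intros z Hz. destruct (In_nth ps z 0 (Hfv z Hz)) as (j & Hj & <-).
  rewrite !subst_env_combine_nth by assumption.
  destruct (Nat.eq_dec j (length l1)) as [->|Hne].
  - right. rewrite !nth_middle, (V_rigid HV). unfold upd. rewrite Nat.eqb_refl.
    split; [reflexivity|exact (leibF_not_occurs_nonL defs _ d _ ps body Hleib Hd)].
  - left. apply functional_extensionality; intros w'.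
    rewrite <- (nth_app_cons_neq l1 l2 ei (ERigid x) j EFalse Hne).
    assert (Ha : In (nth j (l1 ++ ei :: l2) EFalse) (l1 ++ ei :: l2)) by (apply nth_In; lia).
    rewrite Forall_forall in Hcoinc, Hx.
    symmetry. exact (coincidence_upd_fresh _ x _ xi w' (Hcoinc _ Ha) (Hx _ Ha)).
Qed.
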